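(* Let $p$ be a prime, $k \in \mathbb{N}$, and $G_1, \dots, G_k$ finite-dimensional vector spaces over $\mathbb{F}_p$. For $\varepsilon > 0$ set $b(\varepsilon) = (\varepsilon/1000)^{2^{2k+2}}$ and $n(\varepsilon) = \lceil 10 \varepsilon^{-2^{k+1}} \rceil$. Let $f \colon G_1 \times \cdots \times G_k \to \mathbb{D}$ and let $\mu_1, \dots, \mu_n \in \operatorname{Spec}^{\mathrm{ml}}_{\varepsilon}(f)$ be multilinear forms such that $\operatorname{bias}(\mu_i - \mu_j) \leq b(\varepsilon)$ for all $i \neq j$. Then $n < n(\varepsilon)$.
   Context: $\mathbb{D} = \{z \in \mathbb{C} : |z| \leq 1\}$, $\omega = e^{2\pi i/p}$, $\mathbb{E}$ is the uniform average. For a multilinear form $\beta$ on $G_1 \times \cdots \times G_k$, $\operatorname{bias}\beta = \mathbb{E}_{x_1 \in G_1, \dots, x_k \in G_k}\omega^{\beta(x_1, \dots, x_k)}$. The box norm of $g \colon G_1 \times \cdots \times G_k \to \mathbb{C}$ is given by $\|g\|_{\square^k}^{2^k} = \mathbb{E}_{x_1, y_1 \in G_1, \dots, x_k, y_k \in G_k} \prod_{I \subseteq [k]} \operatorname{Conj}^{|I|} g(x_I, y_{[k]\setminus I})$, where $(x_I, y_{[k]\setminus I})$ has $i$-th coordinate $x_i$ if $i \in I$ and $y_i$ otherwise, and $\operatorname{Conj}^j$ is complex conjugation applied $j$ times. $\operatorname{Spec}^{\mathrm{ml}}_{\varepsilon}(f) = \{\mu \text{ multilinear form } G_1 \times \cdots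 \times G_k \to \mathbb{F}_p : \|f\omega^{\mu}\|_{\square^k} \geq \varepsilon\}$. *)

From HB Require Import structures.
From mathcomp Require Import all_boot all_order all_algebra.
From mathcomp Require Import reals trigo.
From mathcomp Require Import complex.
Set Implicit Arguments. Unset Strict Implicit. Unset Printing Implicit Defensive.
Import Order.TTheory GRing.Theory Num.Theory Num.Def.
Local Open Scope ring_scope.

(* G_i = 'rV['F_p]_(d i), a d_i-dimensional F_p-vector space (every
   finite-dimensional F_p-space is isomorphic to one of these).
   G_1 x ... x G_k is the finite type of dependent finite functions. *)
Definition prodG (p k : nat) (d : 'I_k -> nat) : finType :=
  {dffun forall i : 'I_k, 'rV['F_p]_(d i)}.

Definition updG (p k : nat) (d : 'I_k -> nat) (x : prodG p d) (i : 'I_k)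
  (y : 'rV['F_p]_(d i)) : prodG p d :=
  [ffun j => dfwith (fun j => x j) y j].

Definition multilinear (p k : nat) (d : 'I_k -> nat) (mu : prodG p d -> 'F_p) :=
  forall (i : 'I_k) (x : prodG p d) (a : 'F_p) (y z : 'rV['F_p]_(d i)),
    mu (updG x (a *: y + z)) = a * mu (updG x y) + mu (updG x z).

Definition omega (R : realType) (p : nat) : R[i] :=
  Complex (cos (2 * pi / p%:R)) (sin (2 * pi / p%:R)).

(* omega^{a} for a in F_p (well defined since omega^p = 1) *)
Definition omega_pow (R : realType) (p : nat) (a : 'F_p) : R[i] :=
  omega R p ^+ (nat_of_ord a).

Definition avg (R : realType) (T : finType) (F : T -> R[i]) : R[i] :=
  (#|T|%:R)^-1 * \sum_(t : T) F t.

Definition bias (R : realType) (p k : nat) (d : 'I_k -> nat)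
  (beta : prodG p d -> 'F_p) : R[i] :=
  avg (fun x : prodG p d => omega_pow R (beta x)).

Definition mixG (p k : nat) (d : 'I_k -> nat) (I : {set 'I_k})
  (x y : prodG p d) : prodG p d :=
  [ffun i => if i \in I then x i else y i].

Definition box_pow (R : realType) (p k : nat) (d : 'I_k -> nat)
  (g : prodG p d -> R[i]) : R[i] :=
  avg (fun xy : prodG p d * prodG p d =>
    \prod_(I : {set 'I_k}) iter #|I| (@conjC _) (g (mixG I xy.1 xy.2))).

Definition box_norm (R : realType) (p k : nat) (d : 'I_k -> nat)
  (g : prodG p d -> R[i]) : R[i] :=
  (2 ^ k)%N.-root (box_pow g).

Definition in_spec_ml (R : realType) (p k : nat) (d : 'I_k -> nat)
  (eps : R) (f : prodG p d -> R[i]) (mu : prodG p d -> 'F_p) : Prop :=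
  multilinear mu /\ real_complex R eps <= box_norm (fun x => f x * omega_pow R (mu x)).

Definition b_eps (R : realType) (k : nat) (eps : R) : R :=
  (eps / 1000) ^+ (2 ^ (2 * k + 2)).

Definition n_eps (R : realType) (k : nat) (eps : R) : int :=
  Num.ceil (10 * eps ^- (2 ^ (k + 1))).

(** Write [e(a)] for [omega^a] and [S(z) = sum_j e(mu_j z)].  In the box product
    defining [||f e(mu)||^(2^k)], the vertex [(x_I, y_rest)] carries the phase
    [e((-1)^|I| mu(x_I, y_rest))], and for multilinear [mu] these signed values
    add up to [mu (y - x)].  So [||f e(mu_j)||^(2^k)] is the average over [(x, y)]
    of [F(x, y) e(mu_j (y - x))], with [F] the box product of [f], [|F| <= 1].
    Summing over [j] gives [n eps^(2^k) <= E |S|], and by Cauchy-Schwarz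
    [(E |S|)^2 <= E |S|^2 = sum_(j,l) bias (mu_j - mu_l) <= n + n^2 b(eps)].
    As [b(eps)] is tiny compared with [eps^(2^(k+1))], this forces
    [n < 10 eps^(-2^(k+1))]. *)

From HB Require Import structures.
From mathcomp Require Import all_boot all_order all_algebra.
From mathcomp Require Import reals trigo.
From mathcomp Require Import complex.
From mathcomp Require Import ring lra zify.
Set Implicit Arguments.
Unset Strict Implicit.
Unset Printing Implicit Defensive.

Import Order.TTheory GRing.Theory Num.Theory Num.Def.
Local Open Scope ring_scope.

Section RootOfUnity.
Variables (R : realType) (p : nat).
Hypothesis p_prime : prime p.

Let theta : R := 2 * pi / p%:R.

Lemma omega_exprn m :
  omega R p ^+ m = Complex (cos (theta *+ m)) (sin (theta *+ m)).
Proof.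
elim: m => [|m IHm]; first by rewrite expr0 !mulr0n cos0 sin0.
rewrite exprS IHm mulrS cosD sinD.
by apply/eqP; rewrite eq_complex /=; apply/andP; split; apply/eqP; ring.
Qed.

Lemma omega_exprp : omega R p ^+ p = 1.
Proof.
have p_neq0 : (p%:R : R) != 0 by rewrite pnatr_eq0 -lt0n prime_gt0.
rewrite omega_exprn.
have -> : theta *+ p = pi *+ 2 by rewrite -mulr_natr divfK // mulrC mulr_natr.
by rewrite cos2pi sin2pi.
Qed.

Lemma omega_pow_natr m : omega_pow R (m%:R : 'F_p) = omega R p ^+ m.
Proof.
rewrite /omega_pow val_Fp_nat // {2}(divn_eq m p) exprD mulnC exprM.
by rewrite omega_exprp expr1n mul1r.
Qed.

Lemma omega_powD (a b : 'F_p) :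
  omega_pow R (a + b) = omega_pow R a * omega_pow R b.
Proof. by rewrite -[a]natr_Zp -[b]natr_Zp -natrD !omega_pow_natr exprD. Qed.

Lemma omega_pow0 : omega_pow R (0 : 'F_p) = 1.
Proof. by rewrite /omega_pow expr0. Qed.

Lemma omega_pow_sum (I : Type) (r : seq I) (P : pred I) (F : I -> 'F_p) :
  omega_pow R (\sum_(i <- r | P i) F i) = \prod_(i <- r | P i) omega_pow R (F i).
Proof. exact: (big_morph _ omega_powD omega_pow0). Qed.

Lemma norm_omega_pow (a : 'F_p) : `|omega_pow R a| = 1.
Proof.
by rewrite /omega_pow normrX normc_def /= cos2Dsin2 sqrtr1 expr1n.
Qed.

Lemma conj_omega_pow (a : 'F_p) : (omega_pow R a)^* = omega_pow R (- a).
Proof.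
have a_unit : omega_pow R a * omega_pow R (- a) = 1.
  by rewrite -omega_powD subrr omega_pow0.
by rewrite -(mulr1_eq a_unit) invC_norm norm_omega_pow expr1n invr1 mul1r.
Qed.

End RootOfUnity.

Lemma finset_ind (T : finType) (P : {set T} -> Prop) :
  P set0 -> (forall (i : T) (J : {set T}), i \notin J -> P J -> P (i |: J)) ->
  forall J, P J.
Proof.
move=> P0 PU1 J; have [m le_J_m] := ubnP #|J|; elim: m J le_J_m => // m IHm J.
have [->|[i iJ]] := set_0Vmem J; first by [].
rewrite ltnS (cardsD1 i J) iJ => le_J_m; rewrite -(setD1K iJ).
by apply: PU1; [rewrite setD11 | apply: IHm].
Qed.

Lemma sum_subset_setU1 (T : finType) (V : nmodType) (i : T) (J : {set T})
    (F : {set T} -> V) : i \notin J ->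
  \sum_(I : {set T} | I \subset i |: J) F I =
  \sum_(I : {set T} | I \subset J) F I + \sum_(I : {set T} | I \subset J) F (i |: I).
Proof.
move=> iJ; rewrite (bigID (fun I : {set T} => i \in I)) /= addrC; congr (_ + _).
  by apply: eq_bigl => I; rewrite -subsetD1 setU1K.
rewrite (reindex_onto (fun I => i |: I) (fun I => I :\ i)) /=; last first.
  by move=> I /andP[_ iI]; rewrite setD1K.
apply: eq_bigl => I; rewrite setU11 andbT.
apply/andP/idP => [[sIJ /eqP <-]|sIJ].
  by rewrite -(setU1K iJ); apply: setSD.
have iI : i \notin I by apply: contra iJ; apply: (subsetP sIJ).
by rewrite setUS // setU1K.
Qed.

Section AlternatingSum.
Variables (p k : nat) (d : 'I_k -> nat).
Local Notation T := (prodG p d).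

Definition subG (y x : T) : T := [ffun i => y i - x i].

Lemma mixG_setU1 (i : 'I_k) (J : {set 'I_k}) (a z : T) :
  mixG (i |: J) a z = updG (mixG J a z) (a i).
Proof.
apply/ffunP => j; rewrite !ffunE in_setU1.
have [<-|ij] := eqVneq i j; first by rewrite dfwith_in.
by rewrite dfwith_out // ffunE.
Qed.

Lemma updG_mixG (i : 'I_k) (J : {set 'I_k}) (a z : T) (v : 'rV['F_p]_(d i)) :
  i \notin J -> updG (mixG J a z) v = mixG J a (updG z v).
Proof.
move=> iJ; apply/ffunP => j; rewrite !ffunE.
have [<-|ij] := eqVneq i j; first by rewrite (negbTE iJ) !dfwith_in.
by rewrite !dfwith_out // ffunE.
Qed.

Lemma mixG_updG (i : 'I_k) (J : {set 'I_k}) (a z : T) (v : 'rV['F_p]_(d i)) :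
  i \notin J -> mixG J (updG a v) z = mixG J a z.
Proof.
move=> iJ; apply/ffunP => j; rewrite !ffunE.
have [<-|ij] := eqVneq i j; first by rewrite (negbTE iJ).
by rewrite dfwith_out.
Qed.

Variable mu : T -> 'F_p.
Hypothesis mu_multilinear : multilinear mu.

Lemma multilinearB (i : 'I_k) (z : T) (v w : 'rV['F_p]_(d i)) :
  mu (updG z (v - w)) = mu (updG z v) - mu (updG z w).
Proof.
by rewrite addrC -scaleN1r mu_multilinear mulN1r addrC.
Qed.

Lemma multilinear_alt_sum_on (x y : T) (J : {set 'I_k}) (z : T) :
  \sum_(I : {set 'I_k} | I \subset J) (-1) ^+ #|I| * mu (mixG J (mixG I x y) z) =
  mu (mixG J (subG y x) z).
Proof.
elim/finset_ind: J z => [z|i J iJ IHJ z].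
  rewrite (big_pred1 set0) => [|I]; last by rewrite subset0.
  by rewrite cards0 mul1r; congr (mu _); apply/ffunP => j; rewrite !ffunE in_set0.
have notin_sub (I : {set 'I_k}) : I \subset J -> i \notin I.
  by move=> sIJ; apply: contra iJ => /(subsetP sIJ).
have sum_out : \sum_(I : {set 'I_k} | I \subset J)
    (-1) ^+ #|I| * mu (mixG (i |: J) (mixG I x y) z) =
    mu (mixG J (subG y x) (updG z (y i))).
  rewrite -IHJ; apply: eq_bigr => I /notin_sub iI.
  by rewrite mixG_setU1 ffunE (negbTE iI) updG_mixG.
have sum_in : \sum_(I : {set 'I_k} | I \subset J)
    (-1) ^+ #|i |: I| * mu (mixG (i |: J) (mixG (i |: I) x y) z) =
    - mu (mixG J (subG y x) (updG z (x i))).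
  rewrite -IHJ -sumrN; apply: eq_bigr => I /notin_sub iI.
  rewrite mixG_setU1 ffunE setU11 [mixG (i |: I) x y]mixG_setU1 mixG_updG //.
  by rewrite updG_mixG // cardsU1 iI exprS mulN1r mulNr.
rewrite sum_subset_setU1 // sum_out sum_in -!updG_mixG // -multilinearB.
by rewrite mixG_setU1 ffunE.
Qed.

Lemma multilinear_alt_sum (x y : T) :
  \sum_(I : {set 'I_k}) (-1) ^+ #|I| * mu (mixG I x y) = mu (subG y x).
Proof.
have mixGT (a z : T) : mixG setT a z = a by apply/ffunP => j; rewrite ffunE in_setT.
rewrite -[subG y x](mixGT _ x) -(multilinear_alt_sum_on x y setT x).
by apply: eq_big => [I|I _]; rewrite ?subsetT ?mixGT.
Qed.

End AlternatingSum.

Section Average.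
Variables (R : realType) (T : finType).
Local Notation C := R[i].

Lemma eq_avg (F G : T -> C) : F =1 G -> avg F = avg G.
Proof. by move=> eqFG; rewrite /avg (eq_bigr _ (fun t _ => eqFG t)). Qed.

Lemma avgD (F G : T -> C) : avg (fun t => F t + G t) = avg F + avg G.
Proof. by rewrite /avg big_split mulrDr. Qed.

Lemma avgMl (c : C) (F : T -> C) : avg (fun t => c * F t) = c * avg F.
Proof. by rewrite /avg -mulr_sumr mulrCA. Qed.

Lemma avg_sum (I : finType) (F : I -> T -> C) :
  avg (fun t => \sum_j F j t) = \sum_j avg (F j).
Proof. by rewrite /avg exchange_big mulr_sumr. Qed.

Lemma ler_avg (F G : T -> C) : (forall t, F t <= G t) -> avg F <= avg G.
Proof.
by move=> leFG; rewrite ler_wpM2l ?invr_ge0 ?ler0n //; apply: ler_sum.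
Qed.

Lemma norm_avg_le (F : T -> C) : `|avg F| <= avg (fun t => `|F t|).
Proof.
rewrite /avg normrM normfV normr_nat ler_wpM2l ?invr_ge0 ?ler0n //.
exact: ler_norm_sum.
Qed.

Hypothesis T_gt0 : (0 < #|T|)%N.

Lemma avg_cst (c : C) : avg (fun _ : T => c) = c.
Proof.
by rewrite /avg sumr_const -[c *+ _]mulr_natl mulKf // pnatr_eq0 -lt0n.
Qed.

Lemma sqr_avg_le (F : T -> C) : (forall t, 0 <= F t) ->
  avg F ^+ 2 <= avg (fun t => F t ^+ 2).
Proof.
move=> F_ge0; set m := avg F.
have m_ge0 : 0 <= m by rewrite /m -(avg_cst 0); apply: ler_avg.
have variance_ge0 : 0 <= avg (fun t => (F t - m) ^+ 2).
  rewrite -(avg_cst 0); apply: ler_avg => t.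
  by rewrite -realEsqr rpredB ?ger0_real.
have variance_eq : avg (fun t => (F t - m) ^+ 2) = avg (fun t => F t ^+ 2) - m ^+ 2.
  rewrite (@eq_avg _ (fun t => (F t ^+ 2 + (- (m *+ 2)) * F t) + m ^+ 2)); last first.
    by move=> t; rewrite sqrrB; ring.
  by rewrite !avgD avgMl !avg_cst -/m; ring.
by rewrite -subr_ge0 -variance_eq.
Qed.

End Average.

Lemma avg_pair (R : realType) (T U : finType) (F : T * U -> R[i]) :
  avg F = avg (fun x => avg (fun y => F (x, y))).
Proof.
rewrite /avg card_prod natrM invfM -mulrA -[in RHS]mulr_sumr.
congr (_ * (_ * _)); rewrite (pair_bigA _ (fun x y => F (x, y))).
by apply: eq_bigr => -[].
Qed.

Section IterConj.
Variable C : numClosedFieldType.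

Lemma iter_conjC n (z : C) : iter n conjC z = if odd n then z^* else z.
Proof. by elim: n => //= n ->; case: (odd n); rewrite ?conjCK. Qed.

Lemma iter_conjCM n (a b : C) :
  iter n conjC (a * b) = iter n conjC a * iter n conjC b.
Proof. by rewrite !iter_conjC; case: (odd n); rewrite ?rmorphM. Qed.

Lemma norm_iter_conjC n (z : C) : `|iter n conjC z| = `|z|.
Proof. by rewrite iter_conjC; case: (odd n); rewrite ?norm_conjC. Qed.

End IterConj.

Section BoxNorm.
Variables (R : realType) (p k : nat) (d : 'I_k -> nat).
Hypothesis p_prime : prime p.
Local Notation T := (prodG p d).
Local Notation C := R[i].

Lemma card_prodG_gt0 : (0 < #|T|)%N.
Proof. by apply/card_gt0P; exists [ffun=> 0]. Qed.

Lemma avg_subG (h : T -> C) : avg (fun t : T * T => h (subG t.2 t.1)) = avg h.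
Proof.
have subG_inj (x : T) : injective (fun y => subG y x).
  move=> y z /ffunP eq_yz; apply/ffunP => i.
  by have := eq_yz i; rewrite !ffunE => /subIr.
rewrite avg_pair (@eq_avg _ _ _ (fun _ => avg h)) ?avg_cst ?card_prodG_gt0 // => x.
by rewrite /avg [in RHS](reindex_inj (subG_inj x)).
Qed.

Definition box_term (g : T -> C) (t : T * T) : C :=
  \prod_(I : {set 'I_k}) iter #|I| conjC (g (mixG I t.1 t.2)).

Lemma iter_conjC_omega_pow n (a : 'F_p) :
  iter n conjC (omega_pow R a) = omega_pow R ((-1) ^+ n * a).
Proof.
rewrite iter_conjC -signr_odd; case: (odd n); last by rewrite mul1r.
by rewrite mulN1r conj_omega_pow.
Qed.

Lemma box_term_twist (f : T -> C) (mu : T -> 'F_p) t : multilinear mu ->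
  box_term (fun x => f x * omega_pow R (mu x)) t =
  box_term f t * omega_pow R (mu (subG t.2 t.1)).
Proof.
move=> mu_ml; rewrite /box_term -(multilinear_alt_sum mu_ml) omega_pow_sum //.
by rewrite -big_split; apply: eq_bigr => I _; rewrite iter_conjCM iter_conjC_omega_pow.
Qed.

Lemma norm_box_term_le1 (g : T -> C) t :
  (forall x, `|g x| <= 1) -> `|box_term g t| <= 1.
Proof.
move=> g_le1; rewrite normr_prod; apply: prodr_ile1 => I _.
by rewrite norm_iter_conjC normr_ge0 g_le1.
Qed.

Lemma norm_box_pow_le1 (g : T -> C) :
  (forall x, `|g x| <= 1) -> `|box_pow g| <= 1.
Proof.
have card_gt0 : (0 < #|{: T * T}|)%N by rewrite card_prod muln_gt0 card_prodG_gt0.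
move=> g_le1; apply: le_trans (norm_avg_le _) _.
rewrite -[leRHS](avg_cst card_gt0); apply: ler_avg => t.
exact: norm_box_term_le1.
Qed.

End BoxNorm.

Section Bias.
Variables (R : realType) (p k : nat) (d : 'I_k -> nat).
Hypothesis p_prime : prime p.
Local Notation T := (prodG p d).
Variables (n : nat) (mu : 'I_n -> T -> 'F_p).

Lemma avg_sqr_norm_sum_omega_pow :
  avg (fun z => `|\sum_j omega_pow R (mu j z)| ^+ 2) =
  \sum_j \sum_l bias R (fun x => mu j x - mu l x).
Proof.
rewrite (@eq_avg _ _ _ (fun z => \sum_j \sum_l omega_pow R (mu j z - mu l z))).
  by rewrite avg_sum; apply: eq_bigr => j _; rewrite avg_sum.
move=> z; rewrite normCK rmorph_sum mulr_suml; apply: eq_bigr => j _.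
by rewrite mulr_sumr; apply: eq_bigr => l _; rewrite omega_powD // -conj_omega_pow.
Qed.

Lemma sum_bias_le (b : R) : 0 <= b ->
  (forall j l, j != l -> bias R (fun x => mu j x - mu l x) <= real_complex R b) ->
  \sum_j \sum_l bias R (fun x => mu j x - mu l x) <=
  real_complex R (n%:R + n%:R ^+ 2 * b).
Proof.
move=> b_ge0 bias_le.
have bias0 j : bias R (fun x => mu j x - mu j x) = 1.
  rewrite /bias (@eq_avg _ _ _ (fun _ => 1)) ?avg_cst ?card_prodG_gt0 // => x.
  by rewrite subrr omega_pow0.
apply: (@le_trans _ _ (\sum_(j < n) \sum_(l < n) real_complex R ((j == l)%:R + b))).
  apply: ler_sum => j _; apply: ler_sum => l _.
  have [<-|/bias_le] := eqVneq j l; last by rewrite add0r.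
  by rewrite bias0 rmorphD rmorph1 lerDl ler0c.
have diag j : \sum_(l < n) ((j == l)%:R : R) = 1.
  by rewrite (bigD1 j) //= eqxx big1 ?addr0 // => l; rewrite eq_sym => /negbTE ->.
rewrite -!(eq_bigr _ (fun j _ => rmorph_sum _ _ _ _)) -rmorph_sum lecR.
under eq_bigr => j _ do rewrite big_split /= diag sumr_const card_ord.
by rewrite big_split /= !sumr_const card_ord -mulrnA -[b *+ _]mulr_natl natrM expr2.
Qed.

End Bias.

Section Spectrum.
Variables (R : realType) (p k : nat) (d : 'I_k -> nat).
Hypothesis p_prime : prime p.
Local Notation T := (prodG p d).
Local Notation C := R[i].
Variable f : T -> C.

Lemma box_pow_twist (mu : T -> 'F_p) : multilinear mu ->
  box_pow (fun x => f x * omega_pow R (mu x)) =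
  avg (fun t => box_term f t * omega_pow R (mu (subG t.2 t.1))).
Proof. by move=> mu_ml; apply: eq_avg => t; apply: box_term_twist. Qed.

Lemma box_pow_ge_in_spec (eps : R) (mu : T -> 'F_p) :
  0 < eps -> in_spec_ml eps f mu ->
  real_complex R (eps ^+ (2 ^ k)) <= box_pow (fun x => f x * omega_pow R (mu x)).
Proof.
move=> eps_gt0 [_]; rewrite /box_norm; set r := _.-root _ => le_eps_r.
have eps_ge0 : 0 <= real_complex R eps by rewrite ler0c ltW.
rewrite rmorphXn -[box_pow _](rootCK (expn_gt0 2 k)) -/r.
by rewrite lerXn2r // nnegrE (le_trans eps_ge0).
Qed.

Hypothesis f_le1 : forall x, `|f x| <= 1.

Lemma in_spec_le1 (eps : R) (mu : T -> 'F_p) :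
  0 < eps -> in_spec_ml eps f mu -> eps <= 1.
Proof.
move=> eps_gt0 spec_mu; have := box_pow_ge_in_spec eps_gt0 spec_mu.
set P := box_pow _ => le_eps_P.
have twist_le1 x : `|f x * omega_pow R (mu x)| <= 1.
  by rewrite normrM norm_omega_pow // mulr1.
have P_ge0 : 0 <= P by apply: le_trans le_eps_P; rewrite ler0c exprn_ge0 // ltW.
have le_P_1 : P <= 1.
  exact: le_trans (real_ler_norm (ger0_real P_ge0)) (norm_box_pow_le1 twist_le1).
have := le_trans le_eps_P le_P_1.
by rewrite -(rmorph1 (real_complex R)) lecR expr_le1 ?expn_gt0 // ltW.
Qed.

Lemma norm_sum_box_pow_le n (mu : 'I_n -> T -> 'F_p) :
  (forall j, multilinear (mu j)) ->
  `|\sum_j box_pow (fun x => f x * omega_pow R (mu j x))| <=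
  avg (fun z => `|\sum_j omega_pow R (mu j z)|).
Proof.
move=> mu_ml; rewrite -(avg_subG (fun z => `|\sum_j omega_pow R (mu j z)|)).
rewrite (eq_bigr _ (fun j _ => box_pow_twist (mu_ml j))) -avg_sum.
apply: le_trans (norm_avg_le _) (ler_avg _) => t.
by rewrite -mulr_sumr normrM ler_piMl ?normr_ge0 ?norm_box_term_le1.
Qed.

Lemma card_spec_sqr_le n (mu : 'I_n -> T -> 'F_p) (eps b : R) :
  0 < eps -> 0 <= b -> (forall j, in_spec_ml eps f (mu j)) ->
  (forall j l, j != l -> bias R (fun x => mu j x - mu l x) <= real_complex R b) ->
  (n%:R * eps ^+ (2 ^ k)) ^+ 2 <= n%:R + n%:R ^+ 2 * b.
Proof.
move=> eps_gt0 b_ge0 spec_mu bias_le.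
set a := n%:R * eps ^+ (2 ^ k).
have a_ge0 : 0 <= real_complex R a by rewrite ler0c mulr_ge0 // exprn_ge0 // ltW.
have le_a_sum :
    real_complex R a <= \sum_j box_pow (fun x => f x * omega_pow R (mu j x)).
  have -> : real_complex R a = \sum_(j < n) real_complex R (eps ^+ (2 ^ k)).
    by rewrite sumr_const card_ord rmorphM rmorph_nat mulr_natl.
  by apply: ler_sum => j _; apply: box_pow_ge_in_spec.
have := norm_sum_box_pow_le (fun j => (spec_mu j).1).
rewrite ger0_norm ?(le_trans a_ge0 le_a_sum) // => le_sum_avg.
have le_a_avg := le_trans le_a_sum le_sum_avg.
rewrite -lecR; apply: le_trans _ (sum_bias_le b_ge0 bias_le).
rewrite rmorphXn -avg_sqr_norm_sum_omega_pow //.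
apply: le_trans (sqr_avg_le _ _) => [||z]; last exact: normr_ge0.
  by apply: lerXn2r; rewrite ?nnegrE // (le_trans a_ge0).
by rewrite card_prodG_gt0.
Qed.

End Spectrum.

Section Thresholds.
Variables (R : realType) (k : nat) (eps : R).
Hypothesis eps_gt0 : 0 < eps.

Lemma n_eps_gt0 : (0 < n_eps k eps)%R.
Proof.
rewrite /n_eps -(ltr_int R); apply: lt_le_trans (ceil_ge _).
by rewrite mulr_gt0 // invr_gt0 exprn_gt0.
Qed.

Hypothesis eps_le1 : eps <= 1.

Lemma b_eps_le : b_eps k eps <= eps ^+ (2 ^ (k + 1)) / 1000.
Proof.
have le_exp : (2 ^ (k + 1) <= 2 ^ (2 * k + 2))%N by rewrite leq_pexp2l //; lia.
rewrite /b_eps expr_div_n; apply: ler_pM.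
- by rewrite exprn_ge0 // ltW.
- by rewrite invr_ge0 exprn_ge0.
- exact: (ler_wiXn2l (ltW eps_gt0) eps_le1 le_exp).
- by rewrite lef_pV2 ?posrE ?exprn_gt0 //; apply: ler_eXnr; rewrite ?expn_gt0 //; lra.
Qed.

Lemma lt_n_eps n :
  (n%:R * eps ^+ (2 ^ k)) ^+ 2 <= n%:R + n%:R ^+ 2 * b_eps k eps ->
  (n%:Z < n_eps k eps)%R.
Proof.
case: n => [_|n]; first exact: n_eps_gt0.
set m : R := n.+1%:R; set E := eps ^+ (2 ^ (k + 1)) => le_sqr.
have m_ge1 : 1 <= m by rewrite ler1n.
have E_gt0 : 0 < E by rewrite exprn_gt0.
have sqr_eq : (m * eps ^+ (2 ^ k)) ^+ 2 = m ^+ 2 * E.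
  by rewrite exprMn -exprM /E addn1 expnSr.
have le_mE : m ^+ 2 * E <= m + m ^+ 2 * (E / 1000).
  rewrite -sqr_eq (le_trans le_sqr) // lerD2l; apply: ler_wpM2l; last exact: b_eps_le.
  by rewrite exprn_ge0 // (le_trans ler01 m_ge1).
have lt_mE : m * E < 10 by nra.
rewrite /n_eps -(ltr_int R); apply: lt_le_trans (ceil_ge _).
by rewrite -/E -pmulrn -/m ltr_pdivlMr.
Qed.

End Thresholds.

Theorem theorem32 (R : realType) (p : nat) (k : nat) (d : 'I_k -> nat)
  (eps : R) (f : prodG p d -> R[i]) (n : nat) (mu : 'I_n -> prodG p d -> 'F_p) :
  prime p -> 0 < eps ->
  (forall x, `|f x| <= 1) ->
  (forall j, in_spec_ml eps f (mu j)) ->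
  (forall j l, j != l ->
     bias R (fun x => mu j x - mu l x) <= real_complex R (b_eps k eps)) ->
  (n%:Z < n_eps k eps)%R.
Proof.
move=> p_prime eps_gt0 f_le1 spec_mu bias_le.
have [->|n_gt0] := posnP n; first exact: n_eps_gt0.
have eps_le1 : eps <= 1 := in_spec_le1 f_le1 eps_gt0 (spec_mu (Ordinal n_gt0)).
have b_ge0 : 0 <= b_eps k eps by rewrite exprn_ge0 // divr_ge0 // ltW.
exact/(lt_n_eps eps_gt0 eps_le1)/(card_spec_sqr_le p_prime f_le1 eps_gt0 b_ge0).
Qed.
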